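(* Let $\mathcal H$ be a separable complex Hilbert space, $A_1,A_2\in L(\mathcal H)^+$, $B\in L(\mathcal H)$ with closed range. The following are equivalent: (1) there exists $G\in L(\mathcal H)$ with $BG\in\Pi(A_1,R(B))$ and $I-GB\in\Pi(A_2,N(B))$; (2) the pairs $(A_1,R(B))$ and $(A_2,N(B))$ are compatible; (3) $B$ admits a weighted generalized inverse, i.e. there exists $C\in L(\mathcal H)$ with $BCB=B$, $CBC=C$, $A_1BC=(BC)^*A_1$, $A_2CB=(CB)^*A_2$.
   Context: For $A\in L(\mathcal H)^+$ and a closed subspace $\mathcal S$, $\|z\|_A=\langle Az,z\rangle^{1/2}$ and $\Pi(A,\mathcal S)$ is the set of $T\in L(\mathcal H)$ with $R(T)\subseteq\mathcal S$ and $\|y-Ty\|_A\le\|y-s\|_A$ for all $y\in\mathcal H$, $s\in\mathcal S$. The pair $(A,\mathcal S)$ is compatible if there exists $Q\in L(\mathcal H)$ with $Q^2=Q$, $R(Q)=\mathcal S$, $AQ=Q^*A$. $N(\cdot)$ denotes nullspace. *)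

From mathcomp Require Import all_boot all_algebra complex.
From mathcomp Require Import reals.
Set Implicit Arguments. Unset Strict Implicit. Unset Printing Implicit Defensive.
Import GRing.Theory Num.Theory.
Local Open Scope ring_scope.

Section Hilbert.
Variables (R : realType) (V : lmodType R[i]) (ip : V -> V -> R[i]).

Definition nsq (x : V) : R[i] := ip x x.

Definition cauchy_seq (u : nat -> V) : Prop :=
  forall e : R[i], 0 < e -> exists N : nat, forall m n : nat,
    (N <= m)%N -> (N <= n)%N -> nsq (u m - u n) < e.
Definition converges_to (u : nat -> V) (l : V) : Prop :=
  forall e : R[i], 0 < e -> exists N : nat, forall n : nat,
    (N <= n)%N -> nsq (u n - l) < e.

Definition is_hilbert : Prop :=
  [/\ (forall (a : R[i]) (x y z : V), ip (a *: x + y) z = a * ip x z + ip y z),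
      (forall x y : V, ip y x = (ip x y)^*),
      (forall x : V, 0 <= ip x x),
      (forall x : V, ip x x = 0 -> x = 0) &
      (forall u : nat -> V, cauchy_seq u -> exists l, converges_to u l)].

Definition separable : Prop :=
  exists d : nat -> V, forall (x : V) (e : R[i]), 0 < e ->
    exists n : nat, nsq (x - d n) < e.

Definition bounded_op (T : V -> V) : Prop :=
  (forall (a : R[i]) (x y : V), T (a *: x + y) = a *: T x + T y) /\
  exists M : R[i], forall x : V, nsq (T x) <= M * nsq x.

Definition positive_op (A : V -> V) : Prop :=
  bounded_op A /\ forall x : V, 0 <= ip (A x) x.

Definition range_of (T : V -> V) : V -> Prop := fun y => exists x, T x = y.
Definition kernel_of (T : V -> V) : V -> Prop := fun x => T x = 0.

Definition closed_set (S : V -> Prop) : Prop :=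
  forall (u : nat -> V) (l : V), (forall n, S (u n)) -> converges_to u l -> S l.

Definition closed_range (T : V -> V) : Prop := closed_set (range_of T).

Definition Anorm (A : V -> V) (z : V) : R[i] := sqrtC (ip (A z) z).

(* X = Y^* Z written out: <X x, y> = <Z x, Y y> for all x, y
   (i.e. X = Y^* Z where Y^* is the Hilbert adjoint of Y). *)
Definition eq_adj_comp (X Y Z : V -> V) : Prop :=
  forall x y : V, ip (X x) y = ip (Z x) (Y y).

Definition Pi (A : V -> V) (S : V -> Prop) (T : V -> V) : Prop :=
  bounded_op T /\ (forall y, S (T y)) /\
  forall y s : V, S s -> Anorm A (y - T y) <= Anorm A (y - s).

Definition compatible (A : V -> V) (S : V -> Prop) : Prop :=
  exists Q : V -> V, [/\ bounded_op Q, (forall x, Q (Q x) = Q x),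
    (forall y, range_of Q y <-> S y) & eq_adj_comp (A \o Q) Q A].

End Hilbert.

From mathcomp Require Import all_boot all_algebra complex.
From mathcomp Require Import reals.
From mathcomp Require Import order ring lra.
From Stdlib Require Import Classical ClassicalEpsilon.
Set Implicit Arguments. Unset Strict Implicit. Unset Printing Implicit Defensive.
Import Order.TTheory GRing.Theory Num.Theory.
Local Open Scope ring_scope.

(* If [C] is a weighted generalized inverse of [B], then [BC] and [I - CB] are
   idempotents onto [R(B)] and [N(B)] that are self-adjoint for the
   semi-inner products [<A1 _, _>] and [<A2 _, _>]; such a projector splits
   every vector [A]-orthogonally, so it is an [A]-best approximation, and it
   witnesses compatibility.  Conversely, the residual [y - Ty] of a best
   approximation [T] from a subspace is [A]-orthogonal to that subspace
   (perturb [Ty] along the subspace and minimise the quadratic), which makes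
   [T] [A]-self-adjoint; for [G] as in (1), [C = GBG] then works.  From
   compatible projectors [Q1] onto [R(B)] and [Q2] onto [N(B)], put
   [C y = x - Q2 x] for any [x] with [Bx = Q1 y]: this does not depend on [x],
   and it is bounded because an operator with closed range has a bounded
   right inverse on its range (open mapping theorem, proved by a Baire
   category argument in the complete space [R(B)]). *)

Lemma subrACA (U : zmodType) (x y z t : U) : (x - y) - (z - t) = (x - z) - (y - t).
Proof. by rewrite !opprB addrACA [RHS]addrACA [- y - z]addrC. Qed.

Lemma geometric_lt (R : archiRealFieldType) (a e : R) : 0 < e ->
  exists N : nat, a * 2^-1 ^+ N < e.
Proof.
move=> e0; have [a0|a0] := lerP a 0.
  by exists 0%N; rewrite expr0 mulr1; apply: le_lt_trans a0 e0.
have ae0 : 0 <= a / e by rewrite divr_ge0 // ltW.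
have hb := archi_boundP ae0; set b := Num.Def.archi_bound (a / e) in hb.
exists b; have b2 : (b%:R : R) < 2 ^+ b by rewrite -natrX ltr_nat ltn_expl.
have t0 : (0 : R) < 2 ^+ b by rewrite exprn_gt0.
rewrite exprVn ltr_pdivrMr //; rewrite ltr_pdivrMr // in hb; nra.
Qed.

Section ComplexRe.
Variable R : rcfType.
Local Notation "x %:C" := ((x : R)%:C)%C.
Implicit Types a b : R[i].

Lemma ReD a b : complex.Re (a + b) = complex.Re a + complex.Re b.
Proof. by case: a; case: b. Qed.

Lemma ReJ a : complex.Re a^* = complex.Re a.
Proof. by case: a. Qed.

Lemma ReMrc (r : R) a : complex.Re (r%:C * a) = r * complex.Re a.
Proof. by case: a => x y /=; rewrite mul0r subr0. Qed.

Lemma conjC_real_complex (r : R) : r%:C^* = r%:C.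
Proof. by apply: conj_Creal; rewrite complex_real. Qed.

Lemma ge0_complexE a : 0 <= a -> exists2 r : R, 0 <= r & a = r%:C.
Proof.
move=> a0; have aR : a = (complex.Re a)%:C by rewrite RRe_real // ger0_real.
by exists (complex.Re a) => //; rewrite -lecR -aR.
Qed.

Lemma gt0_complex_sqr a : 0 < a -> exists2 r : R, 0 < r & a = (r ^+ 2)%:C.
Proof.
move=> a0; have [s s0 es] := ge0_complexE (ltW a0).
have s0' : 0 < s by rewrite -ltcR -es.
by exists (Num.sqrt s); rewrite ?sqrtr_gt0 // sqr_sqrtr.
Qed.

End ComplexRe.

Section Hilbert.
Variables (R : realType) (V : lmodType R[i]) (ip : V -> V -> R[i]).
Hypothesis hH : is_hilbert ip.
Local Notation "x %:C" := ((x : R)%:C)%C.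
Implicit Types x y z w : V.

Lemma ip_linear a x y z : ip (a *: x + y) z = a * ip x z + ip y z.
Proof. by case: hH. Qed.

Lemma ipC x y : ip y x = (ip x y)^*.
Proof. by case: hH. Qed.

Lemma ipxx_ge0 x : 0 <= ip x x.
Proof. by case: hH. Qed.

Lemma ipxx_eq0 x : ip x x = 0 -> x = 0.
Proof. by case: hH => _ _ _ /(_ x). Qed.

Lemma ip0l z : ip 0 z = 0.
Proof.
have := ip_linear 1 0 0 z; rewrite scaler0 addr0 mul1r => h.
by have := congr1 (fun t => t - ip 0 z) h; rewrite subrr addrK.
Qed.

Lemma ipDl x y z : ip (x + y) z = ip x z + ip y z.
Proof. by rewrite -[x]scale1r ip_linear mul1r scale1r. Qed.

Lemma ipZl a x z : ip (a *: x) z = a * ip x z.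
Proof. by rewrite -[a *: x]addr0 ip_linear ip0l addr0. Qed.

Lemma ipNl x z : ip (- x) z = - ip x z.
Proof. by rewrite -scaleN1r ipZl mulN1r. Qed.

Lemma ipBl x y z : ip (x - y) z = ip x z - ip y z.
Proof. by rewrite ipDl ipNl. Qed.

Lemma ip0r z : ip z 0 = 0.
Proof. by rewrite ipC ip0l conjC0. Qed.

Lemma ipDr x y z : ip z (x + y) = ip z x + ip z y.
Proof. by rewrite ipC ipDl rmorphD /= -!ipC. Qed.

Lemma ipZr a x z : ip z (a *: x) = a^* * ip z x.
Proof. by rewrite ipC ipZl rmorphM /= -ipC. Qed.

Lemma ipNr x z : ip z (- x) = - ip z x.
Proof. by rewrite ipC ipNl rmorphN /= -ipC. Qed.

Lemma ipBr x y z : ip z (x - y) = ip z x - ip z y.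
Proof. by rewrite ipDr ipNr. Qed.

Definition sqn x : R := complex.Re (ip x x).
Definition reip x y : R := complex.Re (ip x y).
Definition vnorm x : R := Num.sqrt (sqn x).

Lemma ipxxE x : ip x x = (sqn x)%:C.
Proof. by rewrite /sqn RRe_real // ger0_real // ipxx_ge0. Qed.

Lemma sqn_ge0 x : 0 <= sqn x.
Proof. by rewrite -lecR -ipxxE ipxx_ge0. Qed.

Lemma reipC x y : reip y x = reip x y.
Proof. by rewrite /reip ipC ReJ. Qed.

Lemma reipZl (r : R) x y : reip (r%:C *: x) y = r * reip x y.
Proof. by rewrite /reip ipZl ReMrc. Qed.

Lemma sqnD x y : sqn (x + y) = sqn x + sqn y + 2 * reip x y.
Proof. by rewrite /sqn /reip ipDl !ipDr !ReD [ip y x]ipC ReJ; ring. Qed.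

Lemma sqnZ (r : R) x : sqn (r%:C *: x) = r ^+ 2 * sqn x.
Proof. by rewrite /sqn ipZl ipZr conjC_real_complex mulrA -rmorphM ReMrc. Qed.

Lemma sqn_lincomb (a b : R) x y : sqn (a%:C *: x + b%:C *: y) =
  a ^+ 2 * sqn x + b ^+ 2 * sqn y + 2 * (a * b) * reip x y.
Proof. by rewrite sqnD !sqnZ reipZl reipC reipZl reipC; ring. Qed.

Lemma vnorm_ge0 x : 0 <= vnorm x.
Proof. exact: sqrtr_ge0. Qed.

Lemma vnorm_sqr x : vnorm x ^+ 2 = sqn x.
Proof. by rewrite sqr_sqrtr // sqn_ge0. Qed.

Lemma vnorm0 : vnorm 0 = 0.
Proof. by rewrite /vnorm /sqn ip0l sqrtr0. Qed.

Lemma vnorm_eq0 x : vnorm x = 0 -> x = 0.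
Proof. by move=> h; apply: ipxx_eq0; rewrite ipxxE -vnorm_sqr h expr0n. Qed.

Lemma vnorm_gt0 x : x != 0 -> 0 < vnorm x.
Proof. by move=> /eqP x0; rewrite lt0r vnorm_ge0 andbT; apply/eqP => /vnorm_eq0. Qed.

Lemma vnormZ (r : R) x : vnorm (r%:C *: x) = `|r| * vnorm x.
Proof. by rewrite /vnorm sqnZ sqrtrM ?sqr_ge0 // sqrtr_sqr. Qed.

Lemma vnormN x : vnorm (- x) = vnorm x.
Proof. by rewrite -scaleN1r -(rmorphN1 (real_complex R)) vnormZ normrN1 mul1r. Qed.

Lemma vnormBC x y : vnorm (x - y) = vnorm (y - x).
Proof. by rewrite -vnormN opprB. Qed.

Lemma cauchy_schwarz x y : reip x y <= vnorm x * vnorm y.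
Proof.
have [xy0|nz] := eqVneq (vnorm x * vnorm y) 0.
  move: xy0 => /eqP; rewrite mulf_eq0 => /orP[] /eqP/vnorm_eq0 ->.
    by rewrite /reip ip0l vnorm0 mul0r.
  by rewrite /reip ip0r vnorm0 mulr0.
have h := sqn_ge0 ((vnorm y)%:C *: x + (- vnorm x)%:C *: y).
rewrite sqn_lincomb -!vnorm_sqr in h.
have pos : 0 < vnorm x * vnorm y by rewrite lt0r nz mulr_ge0 ?vnorm_ge0.
nra.
Qed.

Lemma vnormD_le x y : vnorm (x + y) <= vnorm x + vnorm y.
Proof.
rewrite -ler_sqr ?nnegrE ?addr_ge0 ?vnorm_ge0 // vnorm_sqr sqnD -!vnorm_sqr.
by have := cauchy_schwarz x y; nra.
Qed.

Lemma vnormB_le x y : vnorm (x - y) <= vnorm x + vnorm y.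
Proof. by rewrite -(vnormN y) vnormD_le. Qed.

Lemma vnormB_split x y z : vnorm (x - z) <= vnorm (x - y) + vnorm (y - z).
Proof. by have := vnormD_le (x - y) (y - z); rewrite addrA subrK. Qed.

Lemma nsq_ltE x (r : R) : 0 <= r -> (nsq ip x < (r ^+ 2)%:C) = (vnorm x < r).
Proof. by move=> r0; rewrite /nsq ipxxE ltcR -vnorm_sqr ltr_pXn2r ?nnegrE ?vnorm_ge0. Qed.

Definition cvg_to (u : nat -> V) (l : V) : Prop :=
  forall e : R, 0 < e -> exists N : nat, forall n, (N <= n)%N -> vnorm (u n - l) < e.

Lemma converges_toP u l : converges_to ip u l <-> cvg_to u l.
Proof.
split => [h e e0 | h e /gt0_complex_sqr [r r0 ->]].
  have [|N hN] := h ((e ^+ 2)%:C); first by rewrite ltcR exprn_gt0.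
  by exists N => n /hN; rewrite nsq_ltE // ltW.
by have [N hN] := h r r0; exists N => n /hN; rewrite nsq_ltE // ltW.
Qed.

Lemma vnorm_complete u :
  (forall e : R, 0 < e -> exists N : nat, forall m n,
     (N <= m)%N -> (N <= n)%N -> vnorm (u m - u n) < e) ->
  exists l, cvg_to u l.
Proof.
move=> hu; have [_ _ _ _ /(_ u) complete] := hH.
have [e /gt0_complex_sqr [r r0 ->]|l /converges_toP] := complete _; last by exists l.
by have [N hN] := hu r r0; exists N => m n Nm Nn; rewrite nsq_ltE ?ltW ?hN.
Qed.

Lemma cauchy_geometric (a : R) u :
  (forall k d, vnorm (u (k + d)%N - u k) <= a * 2^-1 ^+ k) -> exists l, cvg_to u l.
Proof.
move=> inc; apply: vnorm_complete => e e0; have [N hN] := geometric_lt (2 * a) e0.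
exists N => m n Nm Nn; apply: le_lt_trans (vnormB_split _ (u N) _) _.
have := inc N (m - N)%N; have := inc N (n - N)%N.
by rewrite !subnKC // [vnorm (u N - _)]vnormBC; lra.
Qed.

Lemma cvg_to_unique u l l' : cvg_to u l -> cvg_to u l' -> l = l'.
Proof.
move=> hl hl'; apply/eqP; rewrite -subr_eq0; apply/eqP/vnorm_eq0/eqP.
rewrite eq_le vnorm_ge0 andbT; apply/ler_addgt0Pr => e e0; rewrite add0r.
have e2 : 0 < e / 2 by rewrite divr_gt0.
have [N hN] := hl _ e2; have [N' hN'] := hl' _ e2.
apply: le_trans (vnormB_split _ (u (maxn N N')) _) _.
rewrite vnormBC; have := hN _ (leq_maxl N N'); have := hN' _ (leq_maxr N N'); lra.
Qed.

Lemma cvg_to_vnorm_le u l (M : R) :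
  cvg_to u l -> (forall n, vnorm (u n) <= M) -> vnorm l <= M.
Proof.
move=> hl hM; apply/ler_addgt0Pr => e e0; have [N hN] := hl e e0.
have := vnormD_le (l - u N) (u N); rewrite subrK vnormBC.
by have := hN N (leqnn N); have := hM N; lra.
Qed.

Definition lin_op (T : V -> V) : Prop :=
  forall a x y, T (a *: x + y) = a *: T x + T y.

Section LinearOperator.
Variable T : V -> V.
Hypothesis lT : lin_op T.

Lemma lin_op0 : T 0 = 0.
Proof.
have := lT 1 0 0; rewrite scaler0 addr0 scale1r => h.
by have := congr1 (fun t => t - T 0) h; rewrite subrr addrK.
Qed.

Lemma lin_opD x y : T (x + y) = T x + T y.
Proof. by rewrite -[x]scale1r lT !scale1r. Qed.

Lemma lin_opZ a x : T (a *: x) = a *: T x.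
Proof. by rewrite -[a *: x]addr0 lT lin_op0 addr0. Qed.

Lemma lin_opB x y : T (x - y) = T x - T y.
Proof. by rewrite lin_opD -scaleN1r lin_opZ scaleN1r. Qed.

End LinearOperator.

Lemma bounded_opP T : bounded_op ip T <->
  lin_op T /\ exists2 K : R, 0 <= K & forall x, vnorm (T x) <= K * vnorm x.
Proof.
split=> [[lT [M hM]] | [lT [K K0 hK]]]; split => //.
  have [m m0 Mm] := ge0_complexE (normr_ge0 M).
  have hm x : sqn (T x) <= m * sqn x.
    have h := hM x; have h0 : 0 <= M * nsq ip x := le_trans (ipxx_ge0 _) h.
    rewrite -(ger0_norm h0) normrM Mm (ger0_norm (ipxx_ge0 x)) /nsq in h.
    by rewrite -lecR rmorphM /= -!ipxxE.
  exists (Num.sqrt m) => [|x]; first exact: sqrtr_ge0.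
  by rewrite /vnorm -sqrtrM // ler_sqrt ?mulr_ge0 ?sqn_ge0.
exists (K ^+ 2)%:C => x; rewrite /nsq !ipxxE -rmorphM lecR -!vnorm_sqr -exprMn.
by rewrite ler_sqr ?nnegrE ?mulr_ge0 ?vnorm_ge0.
Qed.

Lemma bounded_op_comp T1 T2 :
  bounded_op ip T1 -> bounded_op ip T2 -> bounded_op ip (T1 \o T2).
Proof.
move=> /bounded_opP [l1 [K1 K10 h1]] /bounded_opP [l2 [K2 K20 h2]].
apply/bounded_opP; split=> [a x y | ]; first by rewrite /= l2 l1.
exists (K1 * K2) => [|x]; first exact: mulr_ge0.
by apply: le_trans (h1 _) _; rewrite -mulrA ler_wpM2l.
Qed.

Lemma bounded_op_subid T : bounded_op ip T -> bounded_op ip (fun x => x - T x).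
Proof.
move=> /bounded_opP [lT [K K0 hK]]; apply/bounded_opP.
split=> [a x y | ]; first by rewrite lT scalerBr opprD addrACA.
exists (1 + K) => [|x]; first by rewrite addr_ge0.
by apply: le_trans (vnormB_le _ _) _; rewrite mulrDl mul1r lerD2l.
Qed.

Lemma bounded_op_cvg_to T u l :
  bounded_op ip T -> cvg_to u l -> cvg_to (T \o u) (T l).
Proof.
move=> /bounded_opP [lT [K K0 hK]] hl e e0.
have [N hN] := hl (e / (K + 1)) (divr_gt0 e0 (ltr_wpDl K0 ltr01)).
exists N => n /hN un; rewrite /= -lin_opB //; apply: le_lt_trans (hK _) _.
rewrite ltr_pdivlMr ?ltr_wpDl // in un; nra.
Qed.

Definition subspace (S : V -> Prop) : Prop :=
  S 0 /\ forall a u v, S u -> S v -> S (a *: u + v).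

Lemma subspaceD S u v : subspace S -> S u -> S v -> S (u + v).
Proof. by case=> _ hS Su Sv; rewrite -[u]scale1r; apply: hS. Qed.

Lemma subspaceZ S a u : subspace S -> S u -> S (a *: u).
Proof. by case=> S0 hS Su; rewrite -[a *: u]addr0; apply: hS. Qed.

Lemma subspaceB S u v : subspace S -> S u -> S v -> S (u - v).
Proof. by case=> _ hS Su Sv; rewrite addrC -scaleN1r; apply: hS. Qed.

Lemma range_subspace T : lin_op T -> subspace (range_of T).
Proof.
move=> lT; split; first by exists 0; rewrite lin_op0.
by move=> a _ _ [x <-] [y <-]; exists (a *: x + y); rewrite lT.
Qed.

Lemma kernel_subspace T : lin_op T -> subspace (kernel_of T).
Proof.
move=> lT; split=> [|a x y]; first exact: lin_op0.
by rewrite /kernel_of lT => -> ->; rewrite scaler0 addr0.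
Qed.

Lemma positive_op_ipC A x y : positive_op ip A -> ip (A y) x = (ip (A x) y)^*.
Proof.
move=> [[lA _] A_ge0]; set p := ip (A x) y; set q := ip (A y) x.
(* Polarization: [<A w, w>] is real at [w = x + y] and at [w = x + 'i y]. *)
have self w : (ip (A w) w)^* = ip (A w) w := geC0_conj (A_ge0 w).
have D1 : p^* + q^* - (p + q) = 0.
  rewrite -(subrr (ip (A (x + y)) (x + y))) -{1}self (lin_opD lA).
  by rewrite !ipDl !ipDr !rmorphD /= !self -/p -/q; ring.
have D2 : 'i * p^* - 'i * q^* + 'i * p - 'i * q = 0.
  rewrite -(subrr (ip (A (x + 'i *: y)) (x + 'i *: y))) -{1}self (lin_opD lA) (lin_opZ lA).
  rewrite !ipDl !ipDr !ipZl !ipZr !rmorphD !rmorphM /= conjCK conjCi !self -/p -/q.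
  ring.
have : 2 * 'i * (q - p^*) = 0.
  have -> : 2 * 'i * (q - p^*) =
      - ('i * (p^* + q^* - (p + q))) - ('i * p^* - 'i * q^* + 'i * p - 'i * q) by ring.
  by rewrite D1 D2 mulr0 oppr0 addr0.
move/eqP; rewrite !mulf_eq0 (negbTE (neq0Ci _)) pnatr_eq0 /= subr_eq0.
by move/eqP.
Qed.

Section Weighted.
Variable A : V -> V.
Hypothesis hA : positive_op ip A.

Let lA : lin_op A. Proof. by case: hA => [[]]. Qed.

Lemma ipA_orth_of_min u s :
  (forall t, ip (A u) u <= ip (A (u - t *: s)) (u - t *: s)) -> ip (A u) s = 0.
Proof.
move=> hmin; set a := ip (A u) s.
have hsu : ip (A s) u = a^* := positive_op_ipC u s hA.
have [c c0 hc] := ge0_complexE (proj2 hA s).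
have [p p0 hp] := ge0_complexE (mul_conjC_ge0 a).
(* A step [t = k a] with [0 < k < 2 / c] lowers the quadratic unless [a = 0]. *)
pose k := (c + 1)^-1.
have k0 : 0 < k by rewrite invr_gt0 ltr_wpDl.
have kc : k * c = 1 - k by rewrite /k; field; rewrite gt_eqF // ltr_wpDl.
have := hmin (a * k%:C).
have -> : ip (A (u - (a * k%:C) *: s)) (u - (a * k%:C) *: s) =
    ip (A u) u + (p * (k ^+ 2 * c - 2 * k))%:C.
  rewrite (lin_opB lA) (lin_opZ lA) !ipBl !ipBr !ipZl !ipZr -/a hsu hc.
  rewrite !(rmorphM, rmorphB, rmorphXn, rmorph_nat) /= conjC_real_complex -hp.
  ring.
rewrite lerDl ler0c.
have -> : k ^+ 2 * c - 2 * k = - (k + k ^+ 2) by rewrite expr2 -mulrA kc; ring.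
rewrite mulrN oppr_ge0 => hq.
have kk : 0 < k + k ^+ 2 by rewrite ltr_wpDr // exprn_ge0 // ltW.
have p0' : p = 0 by apply/eqP; rewrite eq_le p0 andbT; nra.
by move: hp; rewrite p0' => /eqP; rewrite mulf_eq0 conjC_eq0 orbb => /eqP.
Qed.

Lemma Pi_residual_orth S T y s :
  subspace S -> Pi ip A S T -> S s -> ip (A (y - T y)) s = 0.
Proof.
move=> [_ Slin] [_ [STy hmin]] Ss; apply: ipA_orth_of_min => t.
have -> : y - T y - t *: s = y - (t *: s + T y) by rewrite opprD addrCA addrC.
have := hmin y (t *: s + T y) (Slin _ _ _ Ss (STy y)).
by rewrite /Anorm ler_sqrtC ?nnegrE ?(proj2 hA).
Qed.

Lemma Pi_adj S T : subspace S -> Pi ip A S T -> eq_adj_comp ip (A \o T) T A.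
Proof.
move=> Ssub PiT x y /=; have [_ [STy _]] := PiT.
have ox : ip (A x) (T y) = ip (A (T x)) (T y).
  apply/eqP; rewrite -subr_eq0 -ipBl -(lin_opB lA).
  exact/eqP/(Pi_residual_orth x Ssub PiT (STy y)).
have oy : ip (A (T x)) y = ip (A (T x)) (T y).
  apply/eqP; rewrite -subr_eq0 -ipBr -conjC_eq0 -(positive_op_ipC _ _ hA).
  exact/eqP/(Pi_residual_orth y Ssub PiT (STy x)).
by rewrite oy ox.
Qed.

Definition weighted_proj (S : V -> Prop) (P : V -> V) : Prop :=
  [/\ bounded_op ip P, (forall x, P (P x) = P x),
      (forall y, range_of P y <-> S y) & eq_adj_comp ip (A \o P) P A].

Lemma eq_adj_comp_subid P : eq_adj_comp ip (A \o P) P A ->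
  eq_adj_comp ip (A \o (fun x => x - P x)) (fun x => x - P x) A.
Proof. by move=> adj x y /=; rewrite (lin_opB lA) ipBl ipBr adj. Qed.

Lemma Anorm_le_add_fixed P u w : eq_adj_comp ip (A \o P) P A ->
  P u = 0 -> P w = w -> Anorm ip A u <= Anorm ip A (u + w).
Proof.
move=> adj Pu Pw.
have uw : ip (A u) w = 0 by rewrite -Pw -adj /= Pu (lin_op0 lA) ip0l.
have wu : ip (A w) u = 0 by rewrite -Pw adj /= Pu ip0r.
rewrite /Anorm (lin_opD lA) !ipDl !ipDr uw wu addr0 add0r.
by rewrite ler_sqrtC ?nnegrE ?addr_ge0 ?(proj2 hA) // lerDl (proj2 hA).
Qed.

Lemma weighted_proj_Pi S P : weighted_proj S P -> Pi ip A S P.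
Proof.
move=> [bP Pidem PS adj]; have [lP _] := bP.
split=> //; split=> [y | y s /PS [z <-]]; first by apply/PS; exists y.
have -> : y - P z = (y - P y) + (P y - P z) by rewrite addrA subrK.
by apply: Anorm_le_add_fixed adj _ _; rewrite !(lin_opB lP) !Pidem ?subrr.
Qed.

End Weighted.

Section Baire.
Variable Y : V -> Prop.
Hypothesis Ycl : closed_set ip Y.

Lemma shrink_ball (F : V -> Prop) y0 z (r e : R) :
  0 < r -> 0 < e -> vnorm (z - y0) < r / 2 -> (forall w, F w -> e <= vnorm (z - w)) ->
  exists r' : R, [/\ 0 < r', r' <= r / 2,
    (forall w, vnorm (w - z) <= r' -> vnorm (w - y0) < r) &
    (forall w, vnorm (w - z) <= r' -> ~ F w)].
Proof.
move=> r0 e0 zy0 far; exists (Num.min (r / 4) (e / 2)).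
have m1 : Num.min (r / 4) (e / 2) <= r / 4 by rewrite ge_min lexx.
have m2 : Num.min (r / 4) (e / 2) <= e / 2 by rewrite ge_min lexx orbT.
split; first by rewrite lt_min !divr_gt0.
- lra.
- by move=> w wz; apply: le_lt_trans (vnormB_split w z y0) _; lra.
- by move=> w wz /far; rewrite vnormBC; lra.
Qed.

Lemma nested_balls (c : nat -> V) (r : nat -> R) :
  (forall k, 0 < r k /\ r k <= 2^-1 ^+ k) ->
  (forall k w, vnorm (w - c k.+1) <= r k.+1 -> vnorm (w - c k) <= r k) ->
  exists2 l, cvg_to c l & forall k, vnorm (l - c k) <= r k.
Proof.
move=> hr nest.
have nest_ball k d w : vnorm (w - c (k + d)%N) <= r (k + d)%N -> vnorm (w - c k) <= r k.
  elim: d w => [|d IH] w; first by rewrite addn0.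
  by rewrite addnS => /nest; apply: IH.
have centre_ball k d : vnorm (c (k + d)%N - c k) <= r k.
  have [rkd _] := hr (k + d)%N.
  by apply: (nest_ball k d); rewrite subrr vnorm0 ltW.
have inc k d : vnorm (c (k + d)%N - c k) <= 1 * 2^-1 ^+ k.
  by rewrite mul1r; apply: le_trans (centre_ball k d) _; have [] := hr k.
have [l cvl] := cauchy_geometric inc; exists l => // k.
apply/ler_addgt0Pr => e e0; have [N hN] := cvl e e0.
apply: le_trans (vnormB_split _ (c (k + N)%N) _) _; rewrite vnormBC.
by have := hN _ (leq_addl k N); have := centre_ball k N; lra.
Qed.

Lemma baire (F : nat -> V -> Prop) y00 : Y y00 ->
  (forall y, Y y -> exists m, F m y) ->
  exists m y0 r, [/\ Y y0, 0 < r & forall z, Y z -> vnorm (z - y0) < r ->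
    forall e : R, 0 < e -> exists2 w, F m w & vnorm (z - w) < e].
Proof.
(* Otherwise each [F m] is nowhere dense in [Y]: shrinking closed balls, the
   [m]-th one missing [F m], have their centres converge to a point of [Y]
   lying in no [F m]. *)
move=> Yy00 cover; apply: NNPP => no_dense.
have sparse m y0 r : Y y0 -> 0 < r -> exists z (e : R),
    [/\ Y z, vnorm (z - y0) < r / 2, 0 < e & forall w, F m w -> e <= vnorm (z - w)].
  move=> Yy0 r0; apply: NNPP => dense; apply: no_dense.
  exists m, y0, (r / 2); split; rewrite ?divr_gt0 // => z Yz zy0 e e0.
  apply: NNPP => far; apply: dense; exists z, e; split => // w Fw.
  by rewrite leNgt; apply/negP => close; apply: far; exists w.
have next (mp : nat * (V * R)) : exists q : V * R, Y mp.2.1 -> 0 < mp.2.2 ->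
    [/\ Y q.1, 0 < q.2, q.2 <= mp.2.2 / 2,
        (forall w, vnorm (w - q.1) <= q.2 -> vnorm (w - mp.2.1) < mp.2.2) &
        (forall w, vnorm (w - q.1) <= q.2 -> ~ F mp.1 w)].
  case: mp => m [y0 r] /=.
  have [[Yy0 r0]|nP] := classic (Y y0 /\ 0 < r); last first.
    by exists (y0, r) => Yy0 r0; exfalso; apply: nP.
  have [z [e [Yz zy0 e0 far]]] := sparse m y0 r Yy0 r0.
  have [r' [r'0 r'r inside away]] := shrink_ball r0 e0 zy0 far.
  by exists (z, r').
have [step hstep] := choice _ next.
pose s := fix s k : V * R := if k is k'.+1 then step (k', s k') else (y00, 1).
have inv k : [/\ Y (s k).1, 0 < (s k).2 & (s k).2 <= 2^-1 ^+ k].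
  elim: k => [|k [Yk rk rkb]]; first by split; rewrite //= ?expr0 ?ltr01.
  have [? ? half _ _] := hstep (k, s k) Yk rk; split => //=.
  apply: le_trans half _; rewrite exprS [X in _ <= X]mulrC ler_wpM2r //.
  by rewrite invr_ge0 ler0n.
have [l cvl ball] : exists2 l, cvg_to (fun k => (s k).1) l &
    forall k, vnorm (l - (s k).1) <= (s k).2.
  apply: nested_balls => [k | k w]; first by have [] := inv k.
  have [Yk rk _] := inv k; have [_ _ _ inside _] := hstep (k, s k) Yk rk.
  by move/inside/ltW.
have Ys k : Y (s k).1 by have [] := inv k.
have Yl : Y l := Ycl Ys (proj2 (converges_toP _ _) cvl).
have [m Fml] := cover l Yl.
have [Ym rm _] := inv m; have [_ _ _ _ away] := hstep (m, s m) Ym rm.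
exact: away l (ball m.+1) Fml.
Qed.

End Baire.

Section OpenMapping.
Variable B : V -> V.
Hypotheses (hB : bounded_op ip B) (hBcl : closed_range ip B).
Local Notation Y := (range_of B).

Let lB : lin_op B. Proof. by case: hB. Qed.
Let Ysub : subspace Y. Proof. exact: range_subspace. Qed.

Lemma range_approx_preimage : exists r M : R, [/\ 0 < r, 0 <= M &
  forall w, Y w -> vnorm w < r -> forall e : R, 0 < e ->
    exists x, vnorm x <= M /\ vnorm (w - B x) < e].
Proof.
have cover y : Y y -> exists m : nat, exists2 x, B x = y & vnorm x <= m%:R.
  case=> x <-; exists (Num.Def.archi_bound (vnorm x)); exists x => //.
  exact/ltW/archi_boundP/vnorm_ge0.
have [m [y0 [r [Yy0 r0 dense]]]] := baire hBcl (proj1 Ysub) cover.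
exists r, (2 * m%:R); split => //; first by rewrite mulr_ge0 ?ler0n.
move=> w Yw wr e e0.
have e2 : 0 < e / 2 by rewrite divr_gt0.
have Yy0w : Y (y0 + w) by apply: subspaceD.
have y0w : vnorm (y0 + w - y0) < r by rewrite addrAC subrr add0r.
have y0y0 : vnorm (y0 - y0) < r by rewrite subrr vnorm0.
have [w1 [x1 <- hx1] h1] := dense _ Yy0w y0w _ e2.
have [w2 [x2 <- hx2] h2] := dense _ Yy0 y0y0 _ e2.
exists (x1 - x2); split; first by apply: le_trans (vnormB_le _ _) _; lra.
have -> : w - B (x1 - x2) = (y0 + w - B x1) - (y0 - B x2).
  by rewrite subrACA [y0 + w]addrC addrK (lin_opB lB).
by apply: le_lt_trans (vnormB_le _ _) _; lra.
Qed.

Lemma range_half_preimage : exists2 c : R, 0 <= c & forall w, Y w ->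
  exists x, vnorm x <= c * vnorm w /\ vnorm (w - B x) <= vnorm w / 2.
Proof.
have [r [M [r0 M0 approx]]] := range_approx_preimage.
exists (2 * M / r) => [|w Yw]; first by rewrite divr_ge0 ?mulr_ge0 // ltW.
have [->|w0] := eqVneq w 0.
  by exists 0; rewrite (lin_op0 lB) subr0 vnorm0 mulr0 mul0r.
have nw0 := vnorm_gt0 w0.
pose lam := r / (2 * vnorm w).
have lam0 : 0 < lam by rewrite divr_gt0 // mulr_gt0.
have lamV : lam^-1 = 2 * vnorm w / r by rewrite invf_div.
have lamw : vnorm (lam%:C *: w) = r / 2.
  by rewrite vnormZ gtr0_norm // /lam; field; rewrite gt_eqF.
have Ylw : Y (lam%:C *: w) by apply: subspaceZ.
have lw_r : vnorm (lam%:C *: w) < r by rewrite lamw; lra.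
have r4 : 0 < r / 4 by rewrite divr_gt0.
have [x [hx hxe]] := approx _ Ylw lw_r _ r4.
exists ((lam^-1)%:C *: x); rewrite vnormZ gtr0_norm ?invr_gt0 //.
have -> : w - B ((lam^-1)%:C *: x) = (lam^-1)%:C *: (lam%:C *: w - B x).
  by rewrite (lin_opZ lB) scalerBr scalerA -rmorphM mulVf ?gt_eqF // rmorph1 scale1r.
rewrite vnormZ gtr0_norm ?invr_gt0 //; split.
  have -> : 2 * M / r * vnorm w = lam^-1 * M by rewrite lamV; field; rewrite gt_eqF.
  by rewrite ler_wpM2l // invr_ge0 ltW.
have -> : vnorm w / 2 = lam^-1 * (r / 4) by rewrite lamV; field; rewrite gt_eqF.
by rewrite ler_wpM2l ?invr_ge0 ?ltW.
Qed.

Lemma halving_iterates (c : R) (f : V -> V) y : 0 <= c ->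
  (forall w, Y w -> vnorm (f w) <= c * vnorm w /\ vnorm (w - B (f w)) <= vnorm w / 2) ->
  Y y -> exists xs : nat -> V, [/\ xs 0%N = 0,
    forall k, vnorm (y - B (xs k)) <= 2^-1 ^+ k * vnorm y &
    forall k d, vnorm (xs (k + d)%N - xs k) <=
                2 * c * vnorm y * (2^-1 ^+ k - 2^-1 ^+ (k + d))].
Proof.
move=> c0 hf Yy.
pose ys := fix ys k := if k is k'.+1 then ys k' - B (f (ys k')) else y.
pose xs := fix xs k := if k is k'.+1 then xs k' + f (ys k') else 0.
have inv k : [/\ Y (ys k), vnorm (ys k) <= 2^-1 ^+ k * vnorm y & B (xs k) = y - ys k].
  elim: k => [|k [Yk hk Bk]] /=; first by rewrite expr0 mul1r (lin_op0 lB) subrr lexx.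
  have [_ half] := hf _ Yk; split.
  - by apply: subspaceB Ysub Yk _; exists (f (ys k)).
  - apply: le_trans half _; rewrite exprS -mulrA [X in _ <= X]mulrC ler_wpM2r //.
    by rewrite invr_ge0 ler0n.
  - by rewrite (lin_opD lB) Bk opprB addrA addrAC.
exists xs; split => // [k | k d].
  by have [_ hk Bk] := inv k; rewrite Bk opprB addrC subrK.
elim: d => [|d IH]; first by rewrite addn0 !subrr vnorm0 mulr0.
rewrite addnS /= addrAC; apply: le_trans (vnormD_le _ _) _.
have [Yd hd _] := inv (k + d)%N; have [fd _] := hf _ Yd.
have -> : 2 * c * vnorm y * (2^-1 ^+ k - 2^-1 ^+ (k + d).+1) =
    2 * c * vnorm y * (2^-1 ^+ k - 2^-1 ^+ (k + d)) + c * (2^-1 ^+ (k + d) * vnorm y).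
  by rewrite exprS; field.
exact: lerD IH (le_trans fd (ler_wpM2l c0 hd)).
Qed.

Lemma closed_range_preimage : exists2 K : R, 0 <= K &
  forall y, Y y -> exists x, B x = y /\ vnorm x <= K * vnorm y.
Proof.
have [c c0 half] := range_half_preimage.
have pick w : exists x, Y w ->
    vnorm x <= c * vnorm w /\ vnorm (w - B x) <= vnorm w / 2.
  by case: (classic (Y w)) => [/half [x hx] | nYw]; [exists x | exists 0 => /nYw].
have [f hf] := choice _ pick.
exists (2 * c) => [|y Yy]; first by rewrite mulr_ge0.
have [xs [xs0 res inc]] := halving_iterates c0 hf Yy.
have q0 k : 0 <= 2^-1 ^+ k :> R by rewrite exprn_ge0 // invr_ge0.
have cy0 : 0 <= 2 * c * vnorm y by rewrite !mulr_ge0 ?vnorm_ge0.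
have [x cvx] : exists x, cvg_to xs x.
  apply: (@cauchy_geometric (2 * c * vnorm y)) => k d.
  by apply: le_trans (inc k d) (ler_wpM2l cy0 _); rewrite gerDl oppr_le0 q0.
exists x; split.
  apply: (cvg_to_unique (bounded_op_cvg_to hB cvx)) => e e0.
  have [N hN] := geometric_lt (vnorm y) e0.
  exists N => n Nn; rewrite /= vnormBC; apply: le_lt_trans (res n) _.
  apply: le_lt_trans _ hN; rewrite mulrC ler_wpM2l ?vnorm_ge0 //.
  rewrite ler_wiXn2l ?invr_ge0 ?ler0n //.
  by rewrite invf_le1 ?ler1n ?ltr0n.
apply: cvg_to_vnorm_le cvx _ => n.
have := inc 0%N n; rewrite xs0 subr0 add0n expr0 => h.
rewrite -[X in _ <= X]mulr1; apply: le_trans h (ler_wpM2l cy0 _).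
by rewrite gerDl oppr_le0 q0.
Qed.

End OpenMapping.

Section WeightedInverse.
Variables A1 A2 B : V -> V.
Hypotheses (hA1 : positive_op ip A1) (hA2 : positive_op ip A2) (hB : bounded_op ip B).

Let lB : lin_op B. Proof. by case: hB. Qed.

Definition weighted_ginv (C : V -> V) : Prop :=
  [/\ bounded_op ip C, (forall x, B (C (B x)) = B x), (forall x, C (B (C x)) = C x),
      eq_adj_comp ip (A1 \o (B \o C)) (B \o C) A1 &
      eq_adj_comp ip (A2 \o (C \o B)) (C \o B) A2].

Lemma wginv_proj_range C : weighted_ginv C -> weighted_proj A1 (range_of B) (B \o C).
Proof.
case=> bC BCB _ adj _; split => //; first exact: bounded_op_comp.
  by move=> x /=; rewrite BCB.
move=> y; split=> [[x <-] | [x <-]]; first by exists (C x).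
by exists (B x); rewrite /= BCB.
Qed.

Lemma wginv_proj_kernel C :
  weighted_ginv C -> weighted_proj A2 (kernel_of B) (fun x => x - C (B x)).
Proof.
case=> bC BCB CBC _ adj; have [lC _] := bC; split.
- exact: bounded_op_subid (bounded_op_comp bC hB).
- by move=> x; rewrite (lin_opB lB) (lin_opB lC) CBC subrr subr0.
- move=> y; split=> [[x <-] | By]; first by rewrite /kernel_of (lin_opB lB) BCB subrr.
  by exists y; rewrite By (lin_op0 lC) subr0.
- exact: (eq_adj_comp_subid hA2 adj).
Qed.

Lemma best_approx_wginv G :
  [/\ bounded_op ip G, Pi ip A1 (range_of B) (B \o G) &
      Pi ip A2 (kernel_of B) (fun x => x - G (B x))] ->
  weighted_ginv (fun x => G (B (G x))).
Proof.
case=> bG Pi1 Pi2.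
have BGB x : B (G (B x)) = B x.
  have [_ [/(_ x) + _]] := Pi2; rewrite /kernel_of (lin_opB lB).
  by move/eqP; rewrite subr_eq0 eq_sym => /eqP.
have subK z : z - (z - G (B z)) = G (B z) by rewrite opprB addrC subrK.
have adj1 := Pi_adj hA1 (range_subspace lB) Pi1.
have adj2 := eq_adj_comp_subid hA2 (Pi_adj hA2 (kernel_subspace lB) Pi2).
split.
- exact: bounded_op_comp bG (bounded_op_comp hB bG).
- by move=> x; rewrite !BGB.
- by move=> x; rewrite !BGB.
- by move=> x y /=; rewrite !BGB; apply: adj1.
- by move=> x y; have := adj2 x y; rewrite /= !subK !BGB.
Qed.

Lemma kernel_proj_eq Q x x' : lin_op Q -> (forall z, Q (Q z) = Q z) ->
  (forall y, range_of Q y <-> kernel_of B y) -> B x = B x' -> x - Q x = x' - Q x'.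
Proof.
move=> lQ Qidem QB Bxx'.
have /QB [z Qz] : kernel_of B (x - x') by rewrite /kernel_of (lin_opB lB) Bxx' subrr.
by apply/eqP; rewrite -subr_eq0 subrACA -(lin_opB lQ) -Qz Qidem subrr.
Qed.

Lemma compatible_wginv : closed_range ip B ->
  compatible ip A1 (range_of B) -> compatible ip A2 (kernel_of B) ->
  exists C, weighted_ginv C.
Proof.
move=> hBcl [Q1 [bQ1 Q1idem Q1B adj1]] [Q2 [bQ2 Q2idem Q2B adj2]].
have /bounded_opP [lQ1 [K1 K10 hK1]] := bQ1.
have /bounded_opP [lQ2 [K2 K20 hK2]] := bQ2.
have [K K0 preim] := closed_range_preimage hB hBcl.
have pick y : exists x, B x = Q1 y /\ vnorm x <= K * vnorm (Q1 y).
  by apply: preim; apply/Q1B; exists y.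
have [f hf] := choice _ pick.
have Bf y : B (f y) = Q1 y by case: (hf y).
have BQ2 z : B (Q2 z) = 0 by apply/Q2B; exists z.
have Q1B' x : Q1 (B x) = B x.
  have /Q1B [z <-] : range_of B (B x) by exists x.
  exact: Q1idem.
have eqB := kernel_proj_eq lQ2 Q2idem Q2B.
pose C y := f y - Q2 (f y).
have BC y : B (C y) = Q1 y by rewrite (lin_opB lB) BQ2 subr0 Bf.
have CB x : C (B x) = x - Q2 x by apply: eqB; rewrite Bf Q1B'.
have lC : lin_op C.
  move=> a y z; rewrite /C (eqB (f (a *: y + z)) (a *: f y + f z)).
    by rewrite lQ2 scalerBr opprD addrACA.
  by rewrite lB !Bf lQ1.
exists C; split.
- apply/bounded_opP; split => //; exists ((1 + K2) * (K * K1)) => [|y].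
    by rewrite !mulr_ge0 // addr_ge0.
  have fy : vnorm (f y) <= K * K1 * vnorm y.
    by rewrite -mulrA; apply: le_trans (proj2 (hf y)) (ler_wpM2l K0 (hK1 y)).
  apply: le_trans (vnormB_le _ _) _.
  by have := hK2 (f y); have := vnorm_ge0 (f y); nra.
- by move=> x; rewrite CB (lin_opB lB) BQ2 subr0.
- by move=> y; rewrite CB (lin_opB lQ2) Q2idem subrr subr0.
- by move=> x y /=; rewrite !BC; apply: adj1.
- by move=> x y; have := eq_adj_comp_subid hA2 adj2 x y; rewrite /= !CB.
Qed.

Lemma best_approx_compatible :
  (exists G, [/\ bounded_op ip G, Pi ip A1 (range_of B) (B \o G) &
                 Pi ip A2 (kernel_of B) (fun x => x - G (B x))]) ->
  compatible ip A1 (range_of B) /\ compatible ip A2 (kernel_of B).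
Proof.
case=> G /best_approx_wginv hC.
by split; eexists; [exact: wginv_proj_range hC | exact: wginv_proj_kernel hC].
Qed.

Lemma wginv_best_approx : (exists C, weighted_ginv C) ->
  exists G, [/\ bounded_op ip G, Pi ip A1 (range_of B) (B \o G) &
                Pi ip A2 (kernel_of B) (fun x => x - G (B x))].
Proof.
case=> C hC; exists C; have [bC _ _ _ _] := hC.
split=> //; first exact: (weighted_proj_Pi hA1 (wginv_proj_range hC)).
exact: (weighted_proj_Pi hA2 (wginv_proj_kernel hC)).
Qed.

End WeightedInverse.

End Hilbert.

Unset Implicit Arguments.

Theorem mainTheorem19 (R : realType) (V : lmodType R[i]) (ip : V -> V -> R[i])
  (hH : is_hilbert ip) (hsep : separable ip)
  (A1 A2 B : V -> V)
  (hA1 : positive_op ip A1) (hA2 : positive_op ip A2)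
  (hB : bounded_op ip B) (hBcl : closed_range ip B) :
  [<->
    (exists G : V -> V, [/\ bounded_op ip G,
        Pi ip A1 (range_of B) (B \o G) &
        Pi ip A2 (kernel_of B) (fun x => x - G (B x))]);
    (compatible ip A1 (range_of B) /\ compatible ip A2 (kernel_of B));
    (exists C : V -> V, [/\ bounded_op ip C,
        (forall x, B (C (B x)) = B x),
        (forall x, C (B (C x)) = C x),
        eq_adj_comp ip (A1 \o (B \o C)) (B \o C) A1 &
        eq_adj_comp ip (A2 \o (C \o B)) (C \o B) A2])].
Proof.
tfae.
- exact: (best_approx_compatible hH hA1 hA2 hB).
- by case=> compat1 compat2; exact: (compatible_wginv hH hA2 hB hBcl compat1 compat2).
- exact: (wginv_best_approx hH hA1 hA2 hB).
Qed.
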